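(* Let $L$ be a lattice diagram with $n$ cells $(p_1,q_1)<\dots<(p_n,q_n)$, listed in the order described below, and let $k\ge1$ be an integer. Then $$e_k(\partial X)\,\Delta_L(X,Y)=\sum_{1\le i_1<\dots<i_k\le n}\epsilon\big(L,e_k(i_1,\dots,i_k;L)\big)\,\Delta_{e_k(i_1,\dots,i_k;L)}(X,Y).$$ Here $e_k(i_1,\dots,i_k;L)$ is the diagram obtained from $L$ by replacing the biexponents $(p_{i_1},q_{i_1}),\dots,(p_{i_k},q_{i_k})$ by $(p_{i_1}-1,q_{i_1}),\dots,(p_{i_k}-1,q_{i_k})$ and keeping the others unchanged. For each term with $\Delta_{e_k(i_1,\dots,i_k;L)}\neq0$, the coefficient $\epsilon(L,e_k(i_1,\dots,i_k;L))$ is a positive integer, namely $\epsilon(L,L')=\prod_{t=1}^n p_t!\,q_t!\big/\prod_{t=1}^n p'_t!\,q'_t!$, where $(p'_t,q'_t)$ are the biexponents of $L'$.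
   Context: A lattice diagram is a finite subset of $\mathbb{N}\times\mathbb{N}$. Its cells $(p,q)$ are listed in the order where $(p,q)<(p',q')$ iff $q<q'$, or $q=q'$ and $p<p'$. For such a list $(p_1,q_1),\dots,(p_n,q_n)$, $\Delta_L(X,Y)=\det(x_r^{p_t}y_r^{q_t})_{1\le r,t\le n}$ with $X=(x_1,\dots,x_n)$ and $Y=(y_1,\dots,y_n)$. This determinant is zero when two biexponents coincide. A term involving a negative exponent is understood to be zero, since its coefficient vanishes. The function $e_k$ is the $k$-th elementary symmetric function, and $e_k(\partial X)$ is obtained from it by substituting $\partial/\partial x_r$ for $x_r$. *)

From HB Require Import structures.
From mathcomp Require Import all_boot all_order all_algebra.
From mathcomp Require Import mpoly.
Set Implicit Arguments. Unset Strict Implicit. Unset Printing Implicit Defensive.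
Import Order.TTheory GRing.Theory Num.Theory.
Local Open Scope ring_scope.

Definition cell_lt (c c' : nat * nat) : bool :=
  ((c.2 < c'.2) || ((c.2 == c'.2) && (c.1 < c'.1)))%N.

Definition listed_in_order (n : nat) (c : 'I_n -> nat * nat) : Prop :=
  forall s t : 'I_n, (s < t)%N -> cell_lt (c s) (c t).

(* Variables: x_r is 'X_(lshift n r), y_r is 'X_(rshift n r) in {mpoly rat[n+n]}. *)
Definition xvar (n : nat) (r : 'I_n) : 'I_(n + n) := lshift n r.
Definition yvar (n : nat) (r : 'I_n) : 'I_(n + n) := rshift n r.

Definition Delta (n : nat) (c : 'I_n -> nat * nat) : {mpoly rat[n + n]} :=
  \det (\matrix_(r < n, t < n)
          ('X_(xvar r) ^+ (c t).1 * 'X_(yvar r) ^+ (c t).2)).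

Definition dX_prod (n : nat) (S : {set 'I_n}) (P : {mpoly rat[n + n]})
  : {mpoly rat[n + n]} :=
  foldr (fun r Q => mderiv (xvar r) Q) P (enum S).

Definition ek_dX (n k : nat) (P : {mpoly rat[n + n]}) : {mpoly rat[n + n]} :=
  \sum_(S : {set 'I_n} | #|S| == k) dX_prod S P.

(* e_k(i_1,...,i_k; L): biexponents at positions in I get p decremented.
   Only meaningful when p_i >= 1 for all i in I (guarded below). *)
Definition ek_diag (n : nat) (I : {set 'I_n}) (c : 'I_n -> nat * nat)
  : 'I_n -> nat * nat :=
  fun t => if t \in I then ((c t).1.-1, (c t).2) else c t.

Definition ek_defined (n : nat) (I : {set 'I_n}) (c : 'I_n -> nat * nat) : bool :=
  [forall i in I, (0 < (c i).1)%N].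

Definition fact_prod (n : nat) (c : 'I_n -> nat * nat) : nat :=
  \prod_(t < n) (factorial (c t).1 * factorial (c t).2)%N.

Definition eps (n : nat) (c c' : 'I_n -> nat * nat) : rat :=
  (fact_prod c)%:R / (fact_prod c')%:R.

From Pilot Require Import Defs.
From HB Require Import structures.
From mathcomp Require Import all_boot all_order all_algebra.
From mathcomp Require Import perm mpoly.
Import Order.TTheory GRing.Theory Num.Theory.
Set Implicit Arguments. Unset Strict Implicit. Unset Printing Implicit Defensive.
Local Open Scope ring_scope.

(* Expand [Delta_L] by the Leibniz formula into signed monomials
   [prod_r x_r^(p_(s r)) y_r^(q_(s r))].  Applying [prod_(r in S) d/dx_r] to
   such a monomial lowers the x-exponents of the rows in [S] and multiplies by
   [prod_(r in S) p_(s r)]; reindexing the rows [S] by the columns [s @: S]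
   makes every permutation contribute to the Leibniz expansion of
   [Delta (ek_diag I c)], [I = s @: S], with the same coefficient
   [prod_(t in I) p_t], which is exactly [eps c (ek_diag I c)].  Columns with
   [p_t = 0] make the undefined terms vanish. *)

Lemma mderivs_mpolyX (R : nzRingType) (n : nat) (s : seq 'I_n) (m : 'X_{1..n}) :
  uniq s ->
  foldr (fun i p => mderiv i p) ('X_[m] : {mpoly R[n]}) s
  = (\prod_(i <- s) (m i)%:R) *: 'X_[[multinom (m i - (i \in s))%N | i < n]].
Proof.
elim: s => [|i s IHs] /=.
  move=> _; rewrite big_nil scale1r; congr (mpolyX _ _).
  by apply/mnmP => j; rewrite mnmE subn0.
case/andP => i_notin_s /IHs ->; rewrite mderivZ mderivX big_cons scalerA mnmE.
rewrite (negbTE i_notin_s) subn0 commr_nat; congr (_ *: mpolyX _ _).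
apply/mnmP => j; rewrite mnmBE mnm1E !mnmE in_cons -subnDA eq_sym.
by case: (j =P i) => [->|_]; rewrite ?(negbTE i_notin_s) ?addn0.
Qed.

Section XYMonomials.

Variable n : nat.

Definition mnm_xy (a b : 'I_n -> nat) : 'X_{1..n + n} :=
  [multinom match split j with inl r => a r | inr r => b r end | j < n + n].

Lemma mnm_xy_x (a b : 'I_n -> nat) r : mnm_xy a b (xvar r) = a r.
Proof. by rewrite mnmE /xvar (unsplitK (inl _ r)). Qed.

Lemma mnm_xy_y (a b : 'I_n -> nat) r : mnm_xy a b (yvar r) = b r.
Proof. by rewrite mnmE /yvar (unsplitK (inr _ r)). Qed.

Lemma eq_mnm_xy (a a' b b' : 'I_n -> nat) :
  a =1 a' -> b =1 b' -> mnm_xy a b = mnm_xy a' b'.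
Proof. by move=> eq_a eq_b; apply/mnmP => j; rewrite !mnmE; case: (split j). Qed.

Lemma mpolyX_xy (a b : 'I_n -> nat) :
  \prod_(r < n) ('X_(xvar r) ^+ a r * 'X_(yvar r) ^+ b r)
    = 'X_[mnm_xy a b] :> {mpoly rat[n + n]}.
Proof.
rewrite mpolyXE_id big_split_ord /= -big_split /=.
by apply: eq_bigr => r _; rewrite -/(xvar r) -/(yvar r) mnm_xy_x mnm_xy_y.
Qed.

Lemma dX_prod_sumZ (S : {set 'I_n}) (T : finType) (a : T -> rat)
    (P : T -> {mpoly rat[n + n]}) :
  dX_prod S (\sum_i a i *: P i) = \sum_i a i *: dX_prod S (P i).
Proof.
rewrite /dX_prod; elim: (enum S) => //= r s ->.
by rewrite raddf_sum; apply: eq_bigr => i _; exact: mderivZ.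
Qed.

Lemma dX_prod_mpolyX (S : {set 'I_n}) (a b : 'I_n -> nat) :
  dX_prod S 'X_[mnm_xy a b]
  = (\prod_(r in S) (a r)%:R) *: 'X_[mnm_xy (fun r => a r - (r \in S))%N b].
Proof.
have uniq_xS : uniq (map (@xvar n) (enum S)).
  by rewrite (map_inj_uniq (@lshift_inj _ _)) enum_uniq.
rewrite /dX_prod -(foldr_map (@xvar n)) mderivs_mpolyX // big_map big_enum /=.
under eq_bigr do rewrite mnm_xy_x.
congr (_ *: mpolyX _ _); apply/mnmP => j; rewrite !mnmE.
case: (split_ordP j) => r ->.
  by rewrite (mem_map (@lshift_inj _ _)) mem_enum.
suff -> : (rshift n r \in map (@xvar n) (enum S)) = false by rewrite subn0.
by apply/mapP => -[t _] /eqP; rewrite eq_rlshift.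
Qed.

End XYMonomials.

Lemma Delta_Leibniz n (c : 'I_n -> nat * nat) :
  Delta c = \sum_(s : 'S_n)
    ((-1) ^+ s : rat) *: 'X_[mnm_xy (fun r => (c (s r)).1) (fun r => (c (s r)).2)].
Proof.
rewrite /Delta /determinant; apply: eq_bigr => s _.
rewrite -mpolyX_xy mulr_sign scaler_sign.
by under eq_bigr do rewrite mxE.
Qed.

Lemma ek_diag_imset n (c : 'I_n -> nat * nat) (s : 'S_n) (S : {set 'I_n}) r :
  ek_diag (s @: S) c (s r) = ((c (s r)).1 - (r \in S), (c (s r)).2)%N.
Proof.
rewrite /ek_diag (mem_imset _ _ (@perm_inj _ s)).
by case: (r \in S); rewrite ?subn1 ?subn0 -?surjective_pairing.
Qed.

Lemma ek_dX_Delta n (c : 'I_n -> nat * nat) (k : nat) :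
  ek_dX k (Delta c) =
    \sum_(I : {set 'I_n} | #|I| == k)
      (\prod_(t in I) ((c t).1)%:R) *: Delta (ek_diag I c).
Proof.
rewrite /ek_dX; under eq_bigr do rewrite Delta_Leibniz dX_prod_sumZ.
under [RHS]eq_bigr do rewrite Delta_Leibniz scaler_sumr.
rewrite exchange_big [RHS]exchange_big /=; apply: eq_bigr => s _.
rewrite [RHS](reindex_inj (imset_inj (@perm_inj _ s))) /=.
apply: eq_big => [S|S _]; first by rewrite card_imset //; exact: perm_inj.
rewrite dX_prod_mpolyX big_imset /=; last by move=> x y _ _; exact: perm_inj.
rewrite !scalerA mulrC; congr (_ *: mpolyX _ _).
by apply: eq_mnm_xy => r; rewrite ek_diag_imset.
Qed.

(* [Defs.] is needed: [fact_prod] is also a lemma of [binomial]. *)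
Lemma fact_prod_ek_diag n (I : {set 'I_n}) (c : 'I_n -> nat * nat) :
  ek_defined I c ->
  Defs.fact_prod c = (\prod_(t in I) (c t).1 * Defs.fact_prod (ek_diag I c))%N.
Proof.
move/forall_inP => p_gt0.
rewrite /Defs.fact_prod [X in (_ = X * _)%N]big_mkcond /= -big_split /=.
apply: eq_bigr => t _; rewrite /ek_diag; case: ifP => [tI|_]; last by rewrite mul1n.
by have := p_gt0 t tI; case: (c t).1 => // p _; rewrite factS mulnA.
Qed.

Lemma eps_ek_diag n (I : {set 'I_n}) (c : 'I_n -> nat * nat) :
  ek_defined I c -> eps c (ek_diag I c) = (\prod_(t in I) (c t).1)%N%:R.
Proof.
move=> defined; rewrite /eps (fact_prod_ek_diag defined) natrM mulfK //.
by rewrite pnatr_eq0 -lt0n prodn_gt0 // => t; rewrite muln_gt0 !fact_gt0.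
Qed.

Lemma ek_term_scale n (I : {set 'I_n}) (c : 'I_n -> nat * nat) :
  (if ek_defined I c then eps c (ek_diag I c) *: Delta (ek_diag I c) else 0)
  = (\prod_(t in I) ((c t).1)%:R) *: Delta (ek_diag I c).
Proof.
case: ifP => [defined|]; first by rewrite eps_ek_diag // natr_prod.
move/negbT/forall_inPn => [t tI]; rewrite -leqNgt leqn0 => /eqP p0.
by rewrite (bigD1 t) //= p0 mul0r scale0r.
Qed.

Theorem mainTheorem2 (n : nat) (c : 'I_n -> nat * nat) (k : nat) :
  listed_in_order c -> (1 <= k)%N ->
  ek_dX k (Delta c) =
    \sum_(I : {set 'I_n} | #|I| == k)
      (if ek_defined I c then eps c (ek_diag I c) *: Delta (ek_diag I c) else 0)
  /\
  (forall I : {set 'I_n}, #|I| = k -> ek_defined I c ->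
     Delta (ek_diag I c) != 0 ->
     exists m : nat, (0 < m)%N /\ eps c (ek_diag I c) = m%:R).
Proof.
move=> _ _; split.
  by rewrite ek_dX_Delta; apply: eq_bigr => I _; rewrite ek_term_scale.
move=> I _ defined _; exists (\prod_(t in I) (c t).1)%N.
split; last exact: eps_ek_diag.
by apply: prodn_cond_gt0 => t; move/forall_inP: defined; apply.
Qed.
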